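(* Let $T=(V,E)$ be a decision tree with root $r$. Define $w:V\to\mathbb{R}_{\ge0}$ by $w_v=0$ for every leaf $v$ and, recursively for every internal node $v$ with children $C_v$, $w_v$ equal to the optimal value of the semidefinite program \[\min\ \max_{c\in C_v}\big(w_c+X[c,c]+Y[c,c]\big)\quad\text{s.t.}\quad X[c_1,c_2]-Y[c_1,c_2]=1\ \ (c_1,c_2\in C_v,\ c_1\ne c_2),\qquad 0\preceq X,Y\in\mathbb{R}^{C_v\times C_v}.\] Then $w$ is an optimal weighting scheme for $T$, i.e. $w$ is a weighting scheme and $w_r=\mathsf{WDT}(T)$.
   Context: A decision tree is a finite rooted tree whose internal nodes each query a coordinate of the input and whose children correspond to distinct query outcomes; leaves carry outputs. A weighting scheme for $T$ is $w:V\to\mathbb{R}_{\ge0}$ such that $w_v=0$ for all leaves and, for every internal node $v$ with children $C_v$, there exist positive semidefinite $X,Y\in\mathbb{C}^{C_v\times C_v}$ with $X[c_1,c_2]-Y[c_1,c_2]=1$ for all distinct $c_1,c_2\in C_v$ and $w_v-w_c\ge X[c,c]+Y[c,c]$ for all $c\in C_v$. $\mathsf{WDT}(T)$ is the minimum of $w_r$ over all weighting schemes $w$ for $T$. *)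

From mathcomp Require Import all_boot all_order all_algebra.
From mathcomp Require Import all_classical all_reals.
From mathcomp Require Import complex.
Set Implicit Arguments. Unset Strict Implicit. Unset Printing Implicit Defensive.
Import Order.TTheory GRing.Theory Num.Theory.
Local Open Scope ring_scope.
Local Open Scope classical_set_scope.

(* A decision tree, seen as a finite rooted ordered tree: a node carries the
   list of its children (one per distinct query outcome).  A node with no
   children is a leaf; the queried coordinates / outputs do not affect WDT. *)
Inductive dtree := DNode of seq dtree.

(* Vertices are addressed by paths from the root: [::] is the root and
   rcons p i is the i-th child of vertex p. *)
Fixpoint subtree (t : dtree) (p : seq nat) : option dtree :=
  match p with
  | [::] => Some t
  | i :: p' => let: DNode cs := t in
               if (i < size cs)%N then subtree (nth (DNode [::]) cs i) p' else None
  end.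

Definition is_vertex (t : dtree) (p : seq nat) : Prop := exists s, subtree t p = Some s.

Definition cpsd (R : rcfType) (n : nat) (A : 'M[R[i]]_n) : Prop :=
  (map_mx (fun z => z^*) A)^T = A /\
  forall v : 'cV[R[i]]_n, 0 <= ((map_mx (fun z => z^*) v)^T *m A *m v) 0 0.

Definition rpsd (R : realType) (n : nat) (A : 'M[R]_n) : Prop :=
  A^T = A /\ forall v : 'cV[R]_n, 0 <= (v^T *m A *m v) 0 0.

(* Weighting scheme for t (w is a function on vertices = paths; its values
   off the vertex set are irrelevant). *)
Definition weighting_scheme (R : realType) (t : dtree) (w : seq nat -> R) : Prop :=
  [/\ (forall p, is_vertex t p -> 0 <= w p),
      (forall p, subtree t p = Some (DNode [::]) -> w p = 0) &
      (forall p cs, subtree t p = Some (DNode cs) -> cs <> [::] ->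
         exists X Y : 'M[R[i]]_(size cs),
           [/\ cpsd X, cpsd Y,
               (forall c1 c2 : 'I_(size cs), c1 != c2 -> X c1 c2 - Y c1 c2 = 1) &
               (forall c : 'I_(size cs), X c c + Y c c <= ((w p - w (rcons p c))%:C)%C)])].

Definition WDT (R : realType) (t : dtree) : R :=
  inf [set x : R | exists w : seq nat -> R, weighting_scheme t w /\ x = w [::]].

(* Optimal value of the SDP
     min max_c (wc c + X[c,c] + Y[c,c])  s.t. X[c1,c2]-Y[c1,c2]=1 (c1<>c2), X,Y >= 0 real,
   written as the infimum over feasible (X,Y,s) of s with s >= each term. *)
Definition sdp_value (R : realType) (k : nat) (wc : 'I_k -> R) : R :=
  inf [set s : R | exists X Y : 'M[R]_k,
         [/\ rpsd X, rpsd Y,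
             (forall c1 c2 : 'I_k, c1 != c2 -> X c1 c2 - Y c1 c2 = 1) &
             (forall c : 'I_k, wc c + X c c + Y c c <= s)]].

(* The SDP at a node v and the weighting-scheme
   condition at v ask for the same thing, except that the SDP uses real
   symmetric PSD matrices and the scheme complex Hermitian ones; the two are
   interchangeable, since a real PSD matrix is complex PSD and the real part
   of a complex PSD matrix is real PSD.  Hence for any weighting scheme w',
   the matrices w' provides at v, together with w_c <= w'_c at the children,
   make w'_v a feasible value, so w_v <= w'_v.  Conversely the optimum of the
   SDP is attained, because its feasible points of bounded value form a
   compact set (the entries of a PSD matrix are bounded by its diagonal); so
   w is itself a weighting scheme, and its root value is the minimum WDT(T). *)

From mathcomp Require Import all_boot all_order all_algebra.
From mathcomp Require Import all_classical all_reals.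
From mathcomp Require Import complex.
From mathcomp Require Import all_analysis.
From mathcomp Require Import ring lra.
Import numFieldNormedType.Exports.
Import Order.TTheory GRing.Theory Num.Theory.
Set Implicit Arguments. Unset Strict Implicit. Unset Printing Implicit Defensive.
Local Open Scope ring_scope.
Local Open Scope classical_set_scope.

Lemma bilinear_formE (T : pzSemiRingType) n (A : 'M[T]_n) (u v : 'cV[T]_n) :
  (u^T *m A *m v) 0 0 = \sum_i \sum_j u i 0 * A i j * v j 0.
Proof.
rewrite mxE exchange_big; apply: eq_bigr => j _.
by rewrite mxE big_distrl; apply: eq_bigr => i _; rewrite !mxE.
Qed.

Lemma bilinear_form_delta (T : pzSemiRingType) n (A : 'M[T]_n) (a b : 'I_n) :
  ((delta_mx a 0 : 'cV[T]_n)^T *m A *m (delta_mx b 0 : 'cV[T]_n)) 0 0 = A a b.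
Proof. by rewrite trmx_delta -rowE -colE !mxE. Qed.

Lemma inf_least (R : realType) (E : set R) (x : R) :
  E x -> lbound E x -> inf E = x.
Proof.
move=> Ex xE; apply/le_anti.
by rewrite (ge_inf (ex_intro _ x xE) Ex) lb_le_inf //; exists x.
Qed.

Section RealPsd.
Variable R : realType.

Lemma rpsd_sym n (X : 'M[R]_n) (a b : 'I_n) : rpsd X -> X b a = X a b.
Proof. by case=> /matrixP /(_ a b); rewrite mxE. Qed.

Lemma rpsd_diag_ge0 n (X : 'M[R]_n) (c : 'I_n) : rpsd X -> 0 <= X c c.
Proof. by case=> _ /(_ (delta_mx c 0)); rewrite bilinear_form_delta. Qed.

Lemma rpsd_norm_le n (X : 'M[R]_n) (a b : 'I_n) :
  rpsd X -> `|X a b| <= X a a + X b b.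
Proof.
move=> psdX; have [_ ge0] := psdX.
pose e c : 'cV[R]_n := delta_mx c 0.
have entry c d : \sum_j ((e c)^T *m X) 0 j * e d j 0 = X c d.
  by rewrite -bilinear_form_delta mxE.
have form (s : R) : ((e a + s *: e b)^T *m X *m (e a + s *: e b)) 0 0
    = X a a + s * (X a b + X b a) + s ^+ 2 * X b b.
  rewrite [(_ + _)^T]linearD /= [in X in X *m _]linearZ /=.
  by rewrite !mulmxDl !mulmxDr -!scalemxAl -!scalemxAr !mxE !entry; ring.
have := ge0 (e a + 1 *: e b); have := ge0 (e a + (-1) *: e b).
rewrite !form (rpsd_sym a b psdX).
have := rpsd_diag_ge0 a psdX; have := rpsd_diag_ge0 b psdX.
by rewrite ler_norml => *; apply/andP; split; nra.
Qed.

Lemma rpsd0 n : rpsd (0 : 'M[R]_n).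
Proof. by split=> [|v]; rewrite ?trmx0 // mulmx0 mul0mx mxE. Qed.

Lemma rpsd_const1 n : rpsd (const_mx 1 : 'M[R]_n).
Proof.
split=> [|v]; first by rewrite trmx_const.
rewrite bilinear_formE (_ : \sum_i _ = (\sum_i v i 0) ^+ 2) ?sqr_ge0 //.
rewrite expr2 big_distrlr /=; apply: eq_bigr => i _; apply: eq_bigr => j _.
by rewrite mxE mulr1.
Qed.

Lemma cpsd_Re n (X : 'M[R[i]]_n) : cpsd X -> rpsd (map_mx (@complex.Re R) X).
Proof.
case=> herm ge0; split.
  apply/matrixP => i j; move/matrixP: herm => /(_ j i); rewrite !mxE => <-.
  by case: (X i j).
move=> v; have := ge0 (map_mx (real_complex R) v).
rewrite lecE => /andP[_] /=; congr (_ <= _).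
rewrite !bilinear_formE raddf_sum; apply: eq_bigr => i _.
rewrite raddf_sum; apply: eq_bigr => j _.
by rewrite !mxE; case: (X i j) => x y /=; ring.
Qed.

Lemma rpsd_complex n (X : 'M[R]_n) :
  rpsd X -> cpsd (map_mx (real_complex R) X).
Proof.
move=> psdX; split.
  apply/matrixP => i j; rewrite !mxE -[Num.conj _]/(conjc _).
  by rewrite conjc_real (rpsd_sym _ _ psdX).
move=> v; set a := map_mx (@complex.Re R) v; set b := map_mx (@complex.Im R) v.
have entry i j : Num.conj (v i 0) * ((X i j)%:C)%C * v j 0
   = ((a i 0 * X i j * a j 0 + b i 0 * X i j * b j 0)
      +i* (X i j * (a i 0 * b j 0) - X i j * (b i 0 * a j 0)))%C.
  rewrite !mxE; case: (v i 0) => ? ?; case: (v j 0) => ? ? /=.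
  by congr (_ +i* _)%C; ring.
rewrite bilinear_formE lecE /= !raddf_sum /=.
under eq_bigr => i _ do rewrite raddf_sum /=.
under [X in _ && (_ <= X)]eq_bigr => i _ do rewrite raddf_sum /=.
under eq_bigr => i _ do under eq_bigr => j _ do rewrite !mxE entry /=.
under [X in _ && (_ <= X)]eq_bigr => i _ do
  under eq_bigr => j _ do rewrite !mxE entry /=.
apply/andP; split.
  under eq_bigr => i _ do rewrite sumrB.
  rewrite sumrB subr_eq0 [X in _ == X]exchange_big /=; apply/eqP.
  by apply: eq_bigr => i _; apply: eq_bigr => j _; rewrite (rpsd_sym _ _ psdX); ring.
under eq_bigr => i _ do rewrite big_split.
by rewrite big_split /= -!bilinear_formE addr_ge0 //; apply: psdX.2.
Qed.

End RealPsd.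

Section ClosedSets.
Variables (R : realType) (T : topologicalType).

Lemma closed_forall_le (I : Type) (D : set I) (f g : I -> T -> R) :
    (forall i, continuous (f i)) -> (forall i, continuous (g i)) ->
  closed [set x | forall i, D i -> f i x <= g i x].
Proof.
move=> fc gc; rewrite (_ : [set x | _] =
    \bigcap_(i in D) ((fun x => g i x - f i x) @^-1` [set y | 0 <= y])).
  apply: closed_bigI => i _; apply: preimage_closed; last exact: closed_ge.
  by move=> x _; apply: continuousB; [exact: gc|exact: fc].
by apply/seteqP; split => x /= xD i Di; move: (xD i Di); rewrite /= subr_ge0.
Qed.

Lemma closed_forall_eq (I : Type) (D : set I) (f g : I -> T -> R) :
    (forall i, continuous (f i)) -> (forall i, continuous (g i)) ->
  closed [set x | forall i, D i -> f i x = g i x].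
Proof.
move=> fc gc; rewrite (_ : [set x | _] = [set x | forall i, D i -> f i x <= g i x]
    `&` [set x | forall i, D i -> g i x <= f i x]).
  by apply: closedI; apply: closed_forall_le.
apply/seteqP; split => [x fg|x [fg gf] i Di]; first by split=> i Di; rewrite fg.
by apply/eqP; rewrite eq_le fg ?gf.
Qed.

End ClosedSets.

Lemma fst_continuous (U V : topologicalType) : continuous (@fst U V).
Proof. by move=> z; exact: cvg_fst. Qed.

Lemma snd_continuous (U V : topologicalType) : continuous (@snd U V).
Proof. by move=> z; exact: cvg_snd. Qed.

Lemma mx_continuous (T U : topologicalType) m n (f : T -> 'M[U]_(m, n)) :
  (forall i j, continuous (fun x => f x i j)) -> continuous f.
Proof.
move=> fc x A [P Pfx PA] /=.
have : \forall y \near x, forall ij : 'I_m * 'I_n, P ij.1 ij.2 (f y ij.1 ij.2).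
  by apply: filter_forall => -[i j]; apply: fc; exact: Pfx.
by apply: filterS => y Py; apply: PA => i j; exact: (Py (i, j)).
Qed.

Section MatrixTopology.
Variable R : realType.

Lemma mx_box_compact m n (b : R) :
  compact [set M : 'M[R]_(m, n) | forall i j, `|M i j| <= b].
Proof.
have -> : [set M : 'M[R]_(m, n) | forall i j, `|M i j| <= b] =
    vec_mx @` [set v : 'rV[R]_(m * n) | forall l, `[- b, b] (v 0 l)].
  apply/seteqP; split => [M Mb|_ [v vb <-] i j].
    exists (mxvec M); last exact: mxvecK.
    by move=> l; case/mxvec_indexP: l => i j; rewrite mxvecE set_itvcc /= -ler_norml.
  by have := vb (mxvec_index i j); rewrite mxE set_itvcc /= -ler_norml.
apply: continuous_compact.
  apply: continuous_subspaceT; apply: mx_continuous => i j.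
  rewrite (_ : (fun v => _) = fun v : 'rV[R]_(m * n) => v 0 (mxvec_index i j)).
    exact: coord_continuous.
  by apply: funext => v; rewrite mxE.
exact: (@rV_compact _ _ (fun=> `[- b, b]%classic) (fun=> @segment_compact _ (- b) b)).
Qed.

Lemma bilinear_form_continuous n (u v : 'cV[R]_n) :
  continuous (fun A : 'M[R]_n => (u^T *m A *m v) 0 0).
Proof.
rewrite (_ : (fun A => _) = fun A : 'M[R]_n => \sum_i \sum_j u i 0 * A i j * v j 0).
  apply: (continuous_big add_continuous) => i _.
  apply: (continuous_big add_continuous) => j _.
  move=> A; apply: (continuousM (s := fun B : 'M[R]_n => u i 0 * B i j)).
    apply: (continuousM (s := fun=> u i 0)); first exact: cst_continuous.
    exact: coord_continuous.
  exact: cst_continuous.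
by apply: funext => A; rewrite bilinear_formE.
Qed.

Lemma closed_rpsd n : closed [set X : 'M[R]_n | rpsd X].
Proof.
rewrite (_ : [set X | rpsd X] =
    [set X : 'M[R]_n | forall ij : 'I_n * 'I_n, setT ij -> X ij.2 ij.1 = X ij.1 ij.2]
    `&` [set X | forall v : 'cV[R]_n, setT v -> 0 <= (v^T *m X *m v) 0 0]).
  apply: closedI; [apply: closed_forall_eq|apply: closed_forall_le] => *;
    by [exact: coord_continuous|exact: cst_continuous|exact: bilinear_form_continuous].
apply/seteqP; split => [X [/matrixP sym ge0]|X [sym ge0]]; split.
- by move=> [i j] _; have := sym j i; rewrite mxE.
- by move=> v _; exact: ge0.
- by apply/matrixP => i j; rewrite mxE (sym (i, j)).
- by move=> v; exact: ge0.
Qed.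

End MatrixTopology.

Lemma ler_sum_norm (R : realDomainType) (I : finType) (F : I -> R) (i : I) :
  F i <= \sum_j `|F j|.
Proof. by rewrite (bigD1 i) //= (le_trans (ler_norm _)) // lerDl sumr_ge0. Qed.

Section SdpValue.
Variables (R : realType) (k : nat) (wc : 'I_k -> R).

Definition sdp_feasible (X Y : 'M[R]_k) (s : R) :=
  [/\ rpsd X, rpsd Y,
      forall c1 c2 : 'I_k, c1 != c2 -> X c1 c2 - Y c1 c2 = 1 &
      forall c : 'I_k, wc c + X c c + Y c c <= s].

Lemma sdp_feasible_const1 : sdp_feasible (const_mx 1) 0 (\sum_c `|wc c| + 1).
Proof.
split=> [||c1 c2 _|c]; rewrite ?mxE ?subr0 //; first exact: rpsd_const1.
  exact: rpsd0.
by rewrite addr0 lerD2r ler_sum_norm.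
Qed.

Lemma sdp_feasible_child_le X Y s c : sdp_feasible X Y s -> wc c <= s.
Proof.
case=> psdX psdY _ /(_ c).
by have := rpsd_diag_ge0 c psdX; have := rpsd_diag_ge0 c psdY; lra.
Qed.

Lemma sdp_feasible_norm_le X Y s i j : sdp_feasible X Y s ->
  `|X i j| <= (s - wc i) + (s - wc j) /\ `|Y i j| <= (s - wc i) + (s - wc j).
Proof.
case=> psdX psdY _ diag.
have := rpsd_norm_le i j psdX; have := rpsd_norm_le i j psdY.
have := diag i; have := diag j.
have := rpsd_diag_ge0 i psdX; have := rpsd_diag_ge0 j psdX.
have := rpsd_diag_ge0 i psdY; have := rpsd_diag_ge0 j psdY.
by move=> *; split; lra.
Qed.

Lemma closed_sdp_feasible :
  closed [set z : 'M[R]_k * 'M[R]_k * R | sdp_feasible z.1.1 z.1.2 z.2].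
Proof.
have cX i j : continuous (fun z : 'M[R]_k * 'M[R]_k * R => z.1.1 i j).
  move=> z; apply: (@continuous_comp _ _ _ (fst \o fst) (fun X : 'M[R]_k => X i j)).
    by apply: continuous_comp; exact: fst_continuous.
  exact: coord_continuous.
have cY i j : continuous (fun z : 'M[R]_k * 'M[R]_k * R => z.1.2 i j).
  move=> z; apply: (@continuous_comp _ _ _ (snd \o fst) (fun X : 'M[R]_k => X i j)).
    by apply: continuous_comp; [exact: fst_continuous|exact: snd_continuous].
  exact: coord_continuous.
rewrite (_ : [set z | _] =
    (fun z => z.1.1) @^-1` [set X | rpsd X] `&`
    (fun z => z.1.2) @^-1` [set Y | rpsd Y] `&`
    [set z : 'M[R]_k * 'M[R]_k * R | forall c : 'I_k * 'I_k, c.1 != c.2 ->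
       z.1.1 c.1 c.2 - z.1.2 c.1 c.2 = 1] `&`
    [set z : 'M[R]_k * 'M[R]_k * R | forall c, setT c ->
       wc c + z.1.1 c c + z.1.2 c c <= z.2]).
  apply: closedI; [apply: closedI; [apply: closedI|]|].
  - apply: (preimage_closed (f := fst \o fst)); last exact: closed_rpsd.
    by move=> z _; apply: continuous_comp; exact: fst_continuous.
  - apply: (preimage_closed (f := snd \o fst)); last exact: closed_rpsd.
    by move=> z _; apply: continuous_comp; [exact: fst_continuous|exact: snd_continuous].
  - apply: (closed_forall_eq (D := [set c | c.1 != c.2])) => c;
      last exact: cst_continuous.
    by move=> z; apply: continuousB; [exact: cX|exact: cY].
  - apply: closed_forall_le => c; last exact: snd_continuous.
    move=> z; apply: cvgD; last exact: cY.
    by apply: cvgD; [exact: cvg_cst|exact: cX].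
apply/seteqP; split => z /=.
  case=> psdX psdY off diag; split; [split; [split|]|] => //.
  by move=> [c1 c2]; exact: off.
case=> -[[psdX psdY] off] diag; split=> // [c1 c2 c12|c].
  exact: (off (c1, c2)).
exact: diag.
Qed.

Hypothesis k_gt0 : (0 < k)%N.
Let c0 : 'I_k := Ordinal k_gt0.

Lemma sdp_value_le X Y s : sdp_feasible X Y s -> sdp_value wc <= s.
Proof.
move=> fXY; apply: ge_inf; last by exists X, Y.
by exists (wc c0) => s' [X' [Y' /(sdp_feasible_child_le c0)]].
Qed.

Lemma compact_sdp_sublevel (b : R) :
  compact [set z : 'M[R]_k * 'M[R]_k * R |
    sdp_feasible z.1.1 z.1.2 z.2 /\ z.2 <= b].
Proof.
pose B := \sum_c `|b - wc c|.
pose box := [set M : 'M[R]_k | forall i j, `|M i j| <= B + B].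
apply: (@subclosed_compact _ _ (box `*` box `*` `[wc c0, b])).
- apply: closedI; first exact: closed_sdp_feasible.
  apply: (preimage_closed (f := snd) (D := [set x | x <= b])); last exact: closed_le.
  by move=> z _; exact: snd_continuous.
- apply: compact_setX; first by apply: compact_setX; exact: mx_box_compact.
  exact: segment_compact.
move=> [[X Y] s] /= [fXY sb].
have bound i j : (s - wc i) + (s - wc j) <= B + B.
  have := ler_sum_norm (fun c => b - wc c) i.
  by have := ler_sum_norm (fun c => b - wc c) j; rewrite /= -/B; lra.
split; first by split=> i j; have [? ?] := sdp_feasible_norm_le i j fXY;
  have := bound i j; lra.
by rewrite /= in_itv /= sb (sdp_feasible_child_le c0 fXY).
Qed.

Lemma sdp_value_attained : exists X Y, sdp_feasible X Y (sdp_value wc).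
Proof.
pose b : R := \sum_c `|wc c| + 1.
pose K := [set z : 'M[R]_k * 'M[R]_k * R | sdp_feasible z.1.1 z.1.2 z.2 /\ z.2 <= b].
have K0 : K !=set0 by exists (const_mx 1, 0, b); split; [exact: sdp_feasible_const1|].
have [[[X Y] s] /set_mem [/= fXY _] s_min] := compact_EVT_min K0
  (compact_sdp_sublevel (b := b)) (continuous_subspaceT (@snd_continuous _ _)).
exists X, Y; rewrite /sdp_value (inf_least (ex_intro _ X (ex_intro _ Y fXY))) //.
move=> s' [X' [Y' fXY']]; have [s'b|bs'] := leP s' b.
  exact: (s_min (X', Y', s') (mem_set (conj fXY' s'b))).
have := s_min (const_mx 1, 0, b) (mem_set (conj sdp_feasible_const1 (lexx b))).
by move=> /= sb; lra.
Qed.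

End SdpValue.

Lemma dtree_nth_ind (P : dtree -> Prop) :
    (forall cs, (forall i, (i < size cs)%N -> P (nth (DNode [::]) cs i)) ->
      P (DNode cs)) ->
  forall t, P t.
Proof.
move=> IH; fix F 1; case=> cs; apply: IH.
elim: cs => [|c cs IHcs] i i_lt; first discriminate i_lt.
case: i i_lt => [|i] i_lt; [exact: F | exact: IHcs].
Qed.

Lemma subtree_rcons t p cs i : subtree t p = Some (DNode cs) -> (i < size cs)%N ->
  subtree t (rcons p i) = Some (nth (DNode [::]) cs i).
Proof.
elim: p t => [|j p IHp] [ds] /=; first by move=> [->] ->.
by case: ifP => // _; exact: IHp.
Qed.

Lemma vertex_ind (t : dtree) (P : seq nat -> Prop) :
    (forall p cs, subtree t p = Some (DNode cs) ->
      (forall c : 'I_(size cs), P (rcons p c)) -> P p) ->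
  forall p, is_vertex t p -> P p.
Proof.
move=> IH p [s]; elim/dtree_nth_ind: s p => cs IHcs p tp.
apply: (IH _ _ tp) => c; apply: (IHcs _ (ltn_ord c)).
exact: subtree_rcons.
Qed.

Section OptimalWeighting.
Variables (R : realType) (t : dtree) (w : seq nat -> R).
Hypothesis w_leaf : forall p, subtree t p = Some (DNode [::]) -> w p = 0.
Hypothesis w_node : forall p cs, subtree t p = Some (DNode cs) -> cs <> [::] ->
  w p = sdp_value (fun c : 'I_(size cs) => w (rcons p c)).

Lemma w_node_feasible p cs : subtree t p = Some (DNode cs) -> cs <> [::] ->
  exists X Y, sdp_feasible (fun c : 'I_(size cs) => w (rcons p c)) X Y (w p).
Proof.
move=> tp cs0; rewrite (w_node tp cs0); apply: sdp_value_attained.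
by case: (cs) cs0.
Qed.

Lemma w_ge0 p : is_vertex t p -> 0 <= w p.
Proof.
move: p; apply: vertex_ind => p [|c cs] tp IH; first by rewrite (w_leaf tp).
have cs0 : c :: cs <> [::] by [].
have [X [Y fXY]] := w_node_feasible tp cs0.
by apply: le_trans (sdp_feasible_child_le ord0 fXY); exact: IH.
Qed.

Lemma weighting_scheme_w : weighting_scheme t w.
Proof.
split=> [p|//|p cs tp cs0]; first exact: w_ge0.
have [X [Y [psdX psdY off diag]]] := w_node_feasible tp cs0.
exists (map_mx (real_complex R) X), (map_mx (real_complex R) Y).
split=> [||c1 c2 c12|c]; rewrite ?mxE; try exact: rpsd_complex.
  by rewrite -raddfB /= off.
by rewrite -raddfD /= lecR; have := diag c; lra.
Qed.

Lemma w_le_weighting_scheme w' :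
  weighting_scheme t w' -> forall p, is_vertex t p -> w p <= w' p.
Proof.
case=> _ leaf' node'; apply: vertex_ind => p [|c cs] tp IH.
  by rewrite (w_leaf tp) (leaf' _ tp).
have cs0 : c :: cs <> [::] by [].
have [X [Y [cpsdX cpsdY off diag]]] := node' _ _ tp cs0.
rewrite (w_node tp cs0); apply: (sdp_value_le (ltn0Sn (size cs))
  (X := map_mx (@complex.Re R) X) (Y := map_mx (@complex.Re R) Y)).
split=> [||c1 c2 c12|i]; rewrite ?mxE; try exact: cpsd_Re.
  by rewrite -raddfB /= off.
have := diag i; rewrite lecE => /andP[_]; rewrite raddfD /=.
by have := IH i; lra.
Qed.

End OptimalWeighting.

Unset Implicit Arguments.

Theorem theorem6p3 (R : realType) (t : dtree) (w : seq nat -> R) :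
  (forall p, subtree t p = Some (DNode [::]) -> w p = 0) ->
  (forall p cs, subtree t p = Some (DNode cs) -> cs <> [::] ->
     w p = sdp_value (fun c : 'I_(size cs) => w (rcons p c))) ->
  weighting_scheme t w /\ w [::] = WDT R t.
Proof.
move=> w_leaf w_node; have ws := weighting_scheme_w w_leaf w_node.
split=> //; apply/esym/inf_least; first by exists w.
move=> _ [w' [ws' ->]].
by apply: (w_le_weighting_scheme w_leaf w_node ws'); exists t.
Qed.
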